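(* Every flat $\curlyvee$-algebra is functional, and a direct product of functional algebras of signature $(\curlyvee)$ is functional.
   Context: For sets $X,Y$, $\mathrm{Par}(X,Y)$ is the set of partial functions from $X$ to $Y$, viewed as sets of ordered pairs. For $f,g\in\mathrm{Par}(X,Y)$, $g-f$ is the restriction of $g$ to $X\setminus\mathrm{dom}(f)$ and restricted union is $f\curlyvee g=(f-g)\cup(f\cap g)\cup(g-f)$. An algebra $(S,\curlyvee)$ is functional if it is isomorphic to $(A,\curlyvee)$ for some sets $X,Y$ and some $A\subseteq\mathrm{Par}(X,Y)$ closed under restricted union. A flat $\curlyvee$-algebra is an algebra $(S,\curlyvee)$ with an element $0\in S$ such that $a\curlyvee b=0$ whenever $a,b$ are distinct and both different from $0$, and $a\curlyvee a=a$, $a\curlyvee 0=0\curlyvee a=a$ for all $a\in S$. *)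

(* Partial functions are represented as functional relations
   X -> Y -> Prop, i.e. sets of ordered pairs, as in the paper. *)

Definition par (X Y : Type) := X -> Y -> Prop.

Definition is_partial_fun {X Y : Type} (f : par X Y) : Prop :=
  forall x y y', f x y -> f x y' -> y = y'.

Definition dom {X Y : Type} (f : par X Y) (x : X) : Prop := exists y, f x y.

Definition rdiff {X Y : Type} (g f : par X Y) : par X Y :=
  fun x y => g x y /\ ~ dom f x.

Definition rinter {X Y : Type} (f g : par X Y) : par X Y :=
  fun x y => f x y /\ g x y.

Definition runion {X Y : Type} (f g : par X Y) : par X Y :=
  fun x y => rdiff f g x y \/ rinter f g x y \/ rdiff g f x y.

Definition functional (S : Type) (op : S -> S -> S) : Prop :=
  exists (X Y : Type) (A : par X Y -> Prop),
    (forall f, A f -> is_partial_fun f) /\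
    (forall f g, A f -> A g -> A (runion f g)) /\
    exists phi : S -> par X Y,
      (forall a b, phi a = phi b -> a = b) /\
      (forall f, A f <-> exists s, phi s = f) /\
      (forall a b, phi (op a b) = runion (phi a) (phi b)).

Definition flat (S : Type) (op : S -> S -> S) : Prop :=
  exists z : S,
    (forall a b, a <> b -> a <> z -> b <> z -> op a b = z) /\
    (forall a, op a a = a /\ op a z = a /\ op z a = a).

Definition prod_op {I : Type} (S : I -> Type) (op : forall i, S i -> S i -> S i)
  (a b : forall i, S i) : forall i, S i := fun i => op i (a i) (b i).

(* A flat algebra embeds into partial functions from a one-point set: a
   nonzero element a becomes the single pair (tt, a) and 0 the empty function.
   Two distinct nonzero elements are then functions with the same domain that
   disagree everywhere, so their restricted union is empty, i.e. 0.
   For a product, take the disjoint union of the representations of the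
   factors: the restricted union is computed pointwise on each summand. *)

From Stdlib Require Import Classical ClassicalEpsilon FunctionalExtensionality
  PropExtensionality Eqdep.

Lemma par_ext {X Y : Type} (f g : par X Y) :
  (forall x y, f x y <-> g x y) -> f = g.
Proof.
  intros H. apply functional_extensionality; intro x.
  apply functional_extensionality; intro y.
  apply propositional_extensionality, H.
Qed.

Definition par0 {X Y : Type} : par X Y := fun _ _ => False.

Lemma runion_par0l {X Y : Type} (g : par X Y) : runion par0 g = g.
Proof.
  apply par_ext; intros x y; unfold runion, rdiff, rinter, dom, par0.
  firstorder.
Qed.

Lemma runion_par0r {X Y : Type} (f : par X Y) : runion f par0 = f.
Proof.
  apply par_ext; intros x y; unfold runion, rdiff, rinter, dom, par0.
  firstorder.
Qed.

Lemma runion_idem {X Y : Type} (f : par X Y) : runion f f = f.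
Proof.
  apply par_ext; intros x y; unfold runion, rdiff, rinter, dom.
  firstorder.
Qed.

Lemma runion_eq_dom {X Y : Type} (f g : par X Y) :
  (forall x, dom f x <-> dom g x) -> runion f g = rinter f g.
Proof.
  intros Hdom; apply par_ext; intros x y; unfold runion, rdiff, rinter.
  specialize (Hdom x); unfold dom in Hdom; firstorder.
Qed.

Record representation (S : Type) (op : S -> S -> S) := {
  rep_dom : Type;
  rep_cod : Type;
  rep : S -> par rep_dom rep_cod;
  rep_inj : forall a b, rep a = rep b -> a = b;
  rep_partial : forall s, is_partial_fun (rep s);
  rep_morph : forall a b, rep (op a b) = runion (rep a) (rep b)
}.

Arguments rep {S op}.
Arguments rep_inj {S op}.
Arguments rep_partial {S op}.
Arguments rep_morph {S op}.

Lemma functional_of_representation (S : Type) (op : S -> S -> S) :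
  representation S op -> functional S op.
Proof.
  intros R.
  exists (rep_dom S op R), (rep_cod S op R), (fun f => exists s, rep R s = f).
  split; [| split].
  - intros f [s <-]. apply rep_partial.
  - intros f g [a <-] [b <-]. exists (op a b). apply rep_morph.
  - exists (rep R). split; [| split].
    + apply rep_inj.
    + reflexivity.
    + apply rep_morph.
Qed.

Lemma representation_of_functional (S : Type) (op : S -> S -> S) :
  functional S op -> inhabited (representation S op).
Proof.
  intros (X & Y & A & HA & _ & phi & Hinj & Himg & Hmorph).
  constructor; refine {| rep := phi |}; [exact Hinj | | exact Hmorph].
  intros s. apply HA, Himg. exists s. reflexivity.
Qed.

Section Flat.

Variables (S : Type) (op : S -> S -> S) (z : S).
Hypothesis op_distinct : forall a b, a <> b -> a <> z -> b <> z -> op a b = z.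
Hypothesis op_unit : forall a, op a a = a /\ op a z = a /\ op z a = a.

Definition flat_graph (a : S) : par unit S := fun _ y => y = a /\ a <> z.

Lemma flat_graph_zero : flat_graph z = par0.
Proof. apply par_ext; intros u y; unfold flat_graph, par0; tauto. Qed.

Lemma flat_graph_partial (a : S) : is_partial_fun (flat_graph a).
Proof. intros u y y' [Hy _] [Hy' _]. congruence. Qed.

Lemma flat_graph_inj (a b : S) : flat_graph a = flat_graph b -> a = b.
Proof.
  intros E.
  destruct (classic (a = z /\ b = z)) as [[-> ->] | Hnz]; [reflexivity |].
  apply not_and_or in Hnz as [Ha | Hb].
  - assert (H : flat_graph a tt a) by (split; auto).
    rewrite E in H. destruct H as [H _]. exact H.
  - assert (H : flat_graph b tt b) by (split; auto).
    rewrite <- E in H. destruct H as [H _]. symmetry. exact H.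
Qed.

Lemma flat_graph_morph (a b : S) :
  flat_graph (op a b) = runion (flat_graph a) (flat_graph b).
Proof.
  destruct (classic (a = z)) as [-> | Ha].
  { rewrite (proj2 (proj2 (op_unit b))), flat_graph_zero, runion_par0l.
    reflexivity. }
  destruct (classic (b = z)) as [-> | Hb].
  { rewrite (proj1 (proj2 (op_unit a))), flat_graph_zero, runion_par0r.
    reflexivity. }
  destruct (classic (a = b)) as [<- | Hab].
  { rewrite (proj1 (op_unit a)), runion_idem. reflexivity. }
  rewrite (op_distinct a b Hab Ha Hb), flat_graph_zero, runion_eq_dom.
  - apply par_ext; intros u y; unfold par0, rinter, flat_graph.
    split; [tauto |]. intros [[-> _] [E _]]. exact (Hab E).
  - intros x; unfold dom, flat_graph.
    split; intros _; eexists; split; eauto.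
Qed.

Definition flat_representation : representation S op :=
  {| rep := flat_graph;
     rep_inj := flat_graph_inj;
     rep_partial := flat_graph_partial;
     rep_morph := flat_graph_morph |}.

End Flat.

Section DisjointUnion.

Context {I : Type} {X Y : I -> Type}.

Definition par_sigma (f : forall i, par (X i) (Y i))
  : par {i : I & X i} {i : I & Y i} :=
  fun p q => exists y, q = existT _ (projT1 p) y /\ f (projT1 p) (projT2 p) y.

Lemma par_sigma_existT (f : forall i, par (X i) (Y i)) i x y :
  par_sigma f (existT _ i x) (existT _ i y) <-> f i x y.
Proof.
  split.
  - intros [y' [E H]]. apply inj_pair2 in E. subst. exact H.
  - intros H. exists y. split; [reflexivity | exact H].
Qed.

Lemma par_sigma_fiber {f : forall i, par (X i) (Y i)} {i x j y} :
  par_sigma f (existT _ i x) (existT _ j y) -> j = i.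
Proof. intros [y' [E _]]. exact (f_equal (@projT1 _ _) E). Qed.

Lemma dom_par_sigma (f : forall i, par (X i) (Y i)) i x :
  dom (par_sigma f) (existT _ i x) <-> dom (f i) x.
Proof.
  split.
  - intros [q [y [_ H]]]. exists y. exact H.
  - intros [y H]. exists (existT _ i y), y. split; [reflexivity | exact H].
Qed.

Lemma par_sigma_partial (f : forall i, par (X i) (Y i)) :
  (forall i, is_partial_fun (f i)) -> is_partial_fun (par_sigma f).
Proof.
  intros Hf p q q' [y [-> H]] [y' [-> H']].
  f_equal. exact (Hf _ _ _ _ H H').
Qed.

Lemma par_sigma_inj (f g : forall i, par (X i) (Y i)) :
  par_sigma f = par_sigma g -> f = g.
Proof.
  intros E. apply functional_extensionality_dep; intro i.
  apply par_ext; intros x y.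
  rewrite <- !par_sigma_existT, E. reflexivity.
Qed.

Lemma runion_par_sigma (f g : forall i, par (X i) (Y i)) :
  runion (par_sigma f) (par_sigma g) = par_sigma (fun i => runion (f i) (g i)).
Proof.
  apply par_ext; intros [i x] [j y].
  destruct (classic (j = i)) as [<- | Hji].
  - unfold runion, rdiff, rinter.
    rewrite !par_sigma_existT, !dom_par_sigma. reflexivity.
  - split; intros H; exfalso; apply Hji.
    + destruct H as [[H _] | [[H _] | [H _]]]; exact (par_sigma_fiber H).
    + exact (par_sigma_fiber H).
Qed.

End DisjointUnion.

Definition prod_representation {I : Type} (S : I -> Type)
  (op : forall i, S i -> S i -> S i) (R : forall i, representation (S i) (op i))
  : representation (forall i, S i) (prod_op S op).
Proof.
  refine {| rep := fun a => par_sigma (fun i => rep (R i) (a i)) |}.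
  - intros a b E. apply functional_extensionality_dep; intro i.
    apply (rep_inj (R i)). exact (f_equal (fun h => h i) (par_sigma_inj _ _ E)).
  - intros a. apply par_sigma_partial. intros i. apply (rep_partial (R i)).
  - intros a b. rewrite runion_par_sigma. f_equal.
    apply functional_extensionality_dep; intro i. apply (rep_morph (R i)).
Defined.

Theorem proposition4p3 :
  (forall (S : Type) (op : S -> S -> S), flat S op -> functional S op) /\
  (forall (I : Type) (S : I -> Type) (op : forall i, S i -> S i -> S i),
      (forall i, functional (S i) (op i)) ->
      functional (forall i, S i) (prod_op S op)).
Proof.
  split.
  - intros S op [z [Hdistinct Hunit]].
    apply functional_of_representation.
    exact (flat_representation S op z Hdistinct Hunit).
  - intros I S op HF.
    apply functional_of_representation, prod_representation. intros i.
    exact (epsilon (representation_of_functional _ _ (HF i)) (fun _ => True)).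
Qed.
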